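(* Let $r,n\ge1$, $\gcd(a,b)=1$, and $T=\{(t^{-p},t^{-q})\}\subset(\mathbb{C}^* )^2$ with generic integers $p\gg q>0$. For every $\lambda\in B^r_{a,b;n}$, the dimension of the subspace $T^+_\lambda H^r_{a,b;n}$ of the tangent space to $H^r_{a,b;n}$ at $I_\lambda$ on which $T$ acts with positive weight equals the Betti statistic $\beta(\lambda)$.
   Context: $G_{a,b;n}$ is the cyclic group generated by $\mathrm{diag}(\zeta^a,\zeta^b)$, $\zeta$ a primitive $n$-th root of unity, acting on $\mathbb{C}[x,y]$ by $(x,y)\mapsto(\zeta^ax,\zeta^by)$; $H^r_{a,b;n}$ is the moduli scheme of $G_{a,b;n}$-invariant ideals $I$ with $\mathbb{C}[x,y]/I\cong\mathbb{C}[G_{a,b;n}]^r$; $(\mathbb{C}^* )^2$ acts by $(t_1,t_2)\cdot I=\{f(t_1x,t_2y):f\in I\}$. Partitions are Young diagrams $\lambda\subset\mathbb{Z}_{\ge0}^2$; $I_\lambda$ is generated by $x^iy^j$ for $(i,j)\notin\lambda$; $l(j)=\#\{i:(i,j)\in\lambda\}$, $c(i)=\#\{j:(i,j)\in\lambda\}$; box $(i,j)$ has color $ai+bj\bmod n$; $B^r_{a,b;n}$ is the set of partitions of $rn$ in which each color occurs exactly $r$ times. An arrow from $(l,s)$ to $(i',j')$ is invariant if $a(l-i')+b(s-j')\equiv0\pmod n$; $d_{i,j}$ is the arrow from $(l(j),j)$ to $(i,c(i)-1)$, $u_{i,j}$ the arrow from $(i,c(i))$ to $(l(j)-1,j)$;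 $\beta(\lambda)=\#\{(i,j)\in\lambda:d_{i,j}\text{ invariant}\}+\#\{(i,j)\in\lambda:u_{i,j}\text{ invariant and } i=l(j)-1\}$. *)

From HB Require Import structures.
From mathcomp Require Import all_boot all_order all_algebra.
Set Implicit Arguments. Unset Strict Implicit. Unset Printing Implicit Defensive.
Import Order.TTheory GRing.Theory Num.Theory.
Local Open Scope ring_scope.

(* A Young diagram is encoded by its list of row lengths s = [l(0); l(1); ...],
   nonincreasing and positive; box (i,j) lies in lambda iff i < l(j). *)
Definition is_partition (s : seq nat) : bool :=
  sorted geq s && all (fun k => (0 < k)%N) s.

Definition rowl (s : seq nat) (j : nat) : nat := nth 0%N s j.
Definition colh (s : seq nat) (i : nat) : nat := count (fun k => (i < k)%N) s.
Definition in_diag (s : seq nat) (i j : nat) : bool := (i < rowl s j)%N.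

Definition color (a b : int) (n : nat) (i j : nat) : int :=
  ((a * i%:Z + b * j%:Z) %% n%:Z)%Z.

Definition ncolor (a b : int) (n : nat) (s : seq nat) (k : int) : nat :=
  (\sum_(j < size s) \sum_(i < rowl s j) (color a b n i j == k))%N.

Definition in_B (r : nat) (a b : int) (n : nat) (s : seq nat) : bool :=
  [&& is_partition s, sumn s == (r * n)%N &
      [forall k : 'I_n, ncolor a b n s (nat_of_ord k)%:Z == r]].

Definition inv_arrow (a b : int) (n : nat) (l s i' j' : int) : bool :=
  (n%:Z %| a * (l - i') + b * (s - j'))%Z.

Definition d_inv (a b : int) (n : nat) (s : seq nat) (i j : nat) : bool :=
  inv_arrow a b n (rowl s j)%:Z j%:Z i%:Z ((colh s i)%:Z - 1).
Definition u_inv (a b : int) (n : nat) (s : seq nat) (i j : nat) : bool :=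
  inv_arrow a b n i%:Z (colh s i)%:Z ((rowl s j)%:Z - 1) j%:Z.

Definition beta (a b : int) (n : nat) (s : seq nat) : nat :=
  (\sum_(j < size s) \sum_(i < rowl s j)
      (d_inv a b n s i j + (u_inv a b n s i j && (nat_of_ord i == (rowl s j).-1)%N)))%N.

(* R = K[x,y].  I_lambda has K-basis the monomials x^i y^j, (i,j) not in lambda,
   and R/I_lambda has K-basis the classes e_{k,l} of x^k y^l, (k,l) in lambda.
   A K-linear map phi : I_lambda -> R/I_lambda is thus its matrix:
   phi i j k l = coefficient of e_{k,l} in phi(x^i y^j)
   (set to 0 outside the index ranges).  It is R-linear iff it commutes with
   multiplication by x and by y. *)
Definition homfun (K : Type) := nat -> nat -> nat -> nat -> K.

Definition is_hom (K : fieldType) (s : seq nat) (phi : homfun K) : Prop :=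
  [/\ (forall i j k l, (in_diag s i j || ~~ in_diag s k l) -> phi i j k l = 0),
      (* phi(x * x^i y^j) = x * phi(x^i y^j) in R/I *)
      (forall i j k l, ~~ in_diag s i j -> in_diag s k l ->
         phi i.+1 j k l = (if k is k'.+1 then phi i j k' l else 0)) &
      (* phi(y * x^i y^j) = y * phi(x^i y^j) in R/I *)
      (forall i j k l, ~~ in_diag s i j -> in_diag s k l ->
         phi i j.+1 k l = (if l is l'.+1 then phi i j k l' else 0))].

(* action of (t1,t2) in (K^* )^2 (induced by (t1,t2).f = f(t1 x, t2 y))
   on Hom(I,R/I):  (t.phi)(f) = t.(phi(t^{-1}.f)). *)
Definition act (K : fieldType) (t1 t2 : K) (phi : homfun K) : homfun K :=
  fun i j k l => t1 ^ (k%:Z - i%:Z) * t2 ^ (l%:Z - j%:Z) * phi i j k l.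

(* G_{a,b;n}-invariant homomorphisms: fixed by the generator diag(zeta^a, zeta^b) *)
Definition tangent (K : fieldType) (zeta : K) (a b : int) (s : seq nat)
  (phi : homfun K) : Prop :=
  is_hom s phi /\ act (zeta ^ a) (zeta ^ b) phi = phi.

Definition T_weight (K : fieldType) (p q : nat) (w : int) (phi : homfun K) : Prop :=
  forall t : K, t != 0 ->
    act (t ^ (- p%:Z)) (t ^ (- q%:Z)) phi = (fun i j k l => t ^ w * phi i j k l).

Definition lincomb (K : fieldType) (m : nat) (c : 'I_m -> K) (v : 'I_m -> homfun K)
  : homfun K := fun i j k l => \sum_(h < m) c h * v h i j k l.

Definition in_span (K : fieldType) (P : homfun K -> Prop) (phi : homfun K) : Prop :=
  exists m (c : 'I_m -> K) (v : 'I_m -> homfun K),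
    (forall h, P (v h)) /\ phi = lincomb c v.

Definition Tplus (K : fieldType) (zeta : K) (a b : int) (p q : nat) (s : seq nat)
  : homfun K -> Prop :=
  in_span (fun phi => tangent zeta a b s phi /\ exists w : int, 0 < w /\ T_weight p q w phi).

Definition has_dim (K : fieldType) (V : homfun K -> Prop) (d : nat) : Prop :=
  exists B : 'I_d -> homfun K,
    [/\ forall h, V (B h),
        (forall c : 'I_d -> K, lincomb c B = (fun _ _ _ _ => 0) -> forall h, c h = 0) &
        (forall phi, V phi -> exists c : 'I_d -> K, phi = lincomb c B)].

From HB Require Import structures.
From mathcomp Require Import all_boot all_order all_algebra.
From mathcomp Require Import zify ring.
From Stdlib Require FunctionalExtensionality.
Import Order.TTheory GRing.Theory Num.Theory.
Set Implicit Arguments. Unset Strict Implicit. Unset Printing Implicit Defensive.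

(* An element phi of Hom_R(I_lambda, R/I_lambda) is given by its entries phi x y k l, and
   R-linearity says that an entry equals the entry with both boxes moved one step back, as long
   as the source box (x, y) stays outside lambda and the target box (k, l) inside.  These moves
   preserve the displacement (k - x, l - y), hence the T-weight -p(k - x) - q(l - y), which for
   p >> q is positive exactly when k < x, or k = x and l < y.  Walking such an entry back along
   its row and then up the wall of lambda ends either in a forced zero or at the pivot entry of
   a unique arrow: a d_{i,j}, or (for k = x, by the transposed walk) a u_{i,j} with
   i = l(j) - 1.  The indicators of the fibres of this owner map are homomorphisms on which the
   torus acts through the character of their arrow, and every vector of positive weight is the
   combination of them with its pivot values as coefficients.  Hence the G-invariant ones,
   indexed by the arrows counted by beta(lambda), form a basis of T^+. *)

(** * Staircases *)

(* [is_hom] for the diagram with row lengths [len]; the same notion then also covers the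
   transposed diagram. *)
Definition stair_hom (K : fieldType) (len : nat -> nat) (phi : homfun K) : Prop :=
  [/\ (forall x y k l, (x < len y) || ~~ (k < len l) -> phi x y k l = 0%R),
      (forall x y k l, ~~ (x < len y) -> k < len l ->
         phi x.+1 y k l = (if k is k'.+1 then phi x y k' l else 0%R)) &
      (forall x y k l, ~~ (x < len y) -> k < len l ->
         phi x y.+1 k l = (if l is l'.+1 then phi x y k l' else 0%R))].

Section Staircase.

Variables len col : nat -> nat.
Hypothesis len_col : forall i j, (i < len j) = (j < col i).

Lemma len_nonincr j j' : j <= j' -> len j' <= len j.
Proof.
move=> le_jj'; case E: (len j') => [|i] //.
have : i < len j' by rewrite E.
by rewrite len_col => /(leq_ltn_trans le_jj'); rewrite -len_col.
Qed.

Lemma len_eq0 j : col 0 <= j -> len j = 0.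
Proof. by move=> hj; apply/eqP; rewrite -leqn0 leqNgt len_col -leqNgt. Qed.

Lemma stair_hom_transpose (K : fieldType) (phi : homfun K) :
  stair_hom len phi -> stair_hom col (fun x y k l => phi y x l k).
Proof.
move=> [phi0 phix phiy]; split=> x y k l; rewrite -!len_col.
- exact: phi0.
- exact: phiy.
- exact: phix.
Qed.

Lemma stair_hom_row (K : fieldType) (phi : homfun K) A x y l :
  stair_hom len phi -> 0 < A -> len y <= x -> A <= x -> x - A < len l ->
  phi x y (x - A) l = if len y < A then 0%R else phi (len y) y (len y - A) l.
Proof.
move=> [phi0 phix _] A_gt0.
elim: x => [|x IH] ley_x leA_x lt_l; first lia.
have [lt_x_len | le_len_x] := ltnP x (len y).
  by rewrite (_ : len y = x.+1) ?ltnNge ?leA_x //; lia.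
have [lt_x_A | le_A_x] := ltnP x A.
  have eA : A = x.+1 by lia.
  by rewrite eA subnn ltnS le_len_x phix // -?ltnNge; lia.
by rewrite subSn // phix -?ltnNge ?IH //; lia.
Qed.

Lemma stair_hom_far (K : fieldType) (phi : homfun K) x y k l :
  stair_hom len phi -> l + col 0 < y -> phi x y k l = 0%R.
Proof.
move=> [phi0 _ phiy]; elim: l y => [|l IH] [|y] // lt_y.
- have [in_kl|out_kl] := boolP (k < len 0); last by apply: phi0; rewrite out_kl orbT.
  by rewrite phiy // len_eq0 //; lia.
- have [in_kl|out_kl] := boolP (k < len l.+1); last by apply: phi0; rewrite out_kl orbT.
  by rewrite phiy // ?IH // ?len_eq0 //; lia.
Qed.

Section Climb.

Variable A : nat.
Hypothesis A_gt0 : 0 < A.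

(* Starting from the wall box (len y, y) with target (len y - A, l), climb the wall one row at
   a time, the target moving up with it, until the wall is shorter than A or the next target
   leaves the diagram.  The fuel [col 0 - y] suffices since the rows from [col 0] on are empty,
   and [wall_end] is [None] when the climb ends in a forced zero. *)
Definition wall_stop y l := (len y < A) || (len l.+1 + A <= len y).

Fixpoint wall_climb f y l :=
  if f is f.+1 then (if wall_stop y l then y else wall_climb f y.+1 l.+1) else y.

Definition wall_top y l := wall_climb (col 0 - y) y l.

Definition wall_end y l : option nat :=
  let t := wall_top y l in if A <= len t then Some t else None.

Lemma wall_stop_far y l : col 0 <= y -> wall_stop y l.
Proof. by move=> hy; rewrite /wall_stop len_eq0 // A_gt0. Qed.

Lemma wall_topE y l :
  wall_top y l = if wall_stop y l then y else wall_top y.+1 l.+1.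
Proof.
rewrite /wall_top; have [lt_y | le_y] := ltnP y (col 0); first by rewrite -(subnSK lt_y).
by rewrite wall_stop_far // (_ : col 0 - y = 0) //; apply/eqP; rewrite subn_eq0.
Qed.

Lemma wall_top_ind (P : nat -> nat -> nat -> Prop) :
  (forall y l, wall_stop y l -> P y l y) ->
  (forall y l, ~~ wall_stop y l ->
     P y.+1 l.+1 (wall_top y.+1 l.+1) -> P y l (wall_top y.+1 l.+1)) ->
  forall y l, P y l (wall_top y l).
Proof.
move=> Pstop Pstep y l; move: {2}(col 0 - y) (leqnn (col 0 - y)) => m.
elim: m y l => [|m IH] y l hm; rewrite wall_topE; case: ifP => stop_yl; auto.
- by move: stop_yl; rewrite wall_stop_far //; lia.
- by apply: Pstep; [rewrite stop_yl | apply: IH; lia].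
Qed.

Lemma wall_top_ge y l : y <= wall_top y l.
Proof. by elim/wall_top_ind: y l / (wall_top y l) => // y l _ /ltnW. Qed.

Lemma wall_top_stop y l : wall_stop (wall_top y l) (l + (wall_top y l - y)).
Proof.
elim/wall_top_ind: y l / (wall_top y l) => [y l|y l _]; first by rewrite subnn addn0.
have ge_top := wall_top_ge y.+1 l.+1.
by rewrite (_ : l + _ = l.+1 + (wall_top y.+1 l.+1 - y.+1)) //; lia.
Qed.

Lemma wall_top_inv y l : len y < len l + A ->
  len (wall_top y l) < len (l + (wall_top y l - y)) + A.
Proof.
elim/wall_top_ind: y l / (wall_top y l) => [y l _|y l]; first by rewrite subnn addn0.
rewrite /wall_stop negb_or -!ltnNge => /andP[_ lt_y] IH _.
have ge_top := wall_top_ge y.+1 l.+1; have le_len := len_nonincr (leqnSn y).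
by rewrite (_ : l + _ = l.+1 + (wall_top y.+1 l.+1 - y.+1)); [apply: IH|]; lia.
Qed.

Lemma wall_end_some y l t : wall_end y l = Some t ->
  [/\ y <= t, A <= len t & len (l + (t - y)).+1 + A <= len t].
Proof.
rewrite /wall_end; case: ifP => // le_A [<-]; split=> //; first exact: wall_top_ge.
by have := wall_top_stop y l; rewrite /wall_stop ltnNge le_A.
Qed.

Lemma wall_end_small y l : len y < A -> wall_end y l = None.
Proof. by move=> lt_y; rewrite /wall_end wall_topE /wall_stop lt_y /= leqNgt lt_y. Qed.

Lemma wall_end_below y l : l < y -> wall_end y l = None.
Proof.
move=> lt_ly; case E: wall_end => [t|] //; have [le_yt le_At] := wall_end_some E.
have := len_nonincr (_ : (l + (t - y)).+1 <= t); lia.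
Qed.

Lemma wall_end_start y l : len l.+1 + A <= len y -> wall_end y l = Some y.
Proof.
move=> stop; rewrite /wall_end wall_topE /wall_stop stop orbT.
by rewrite (leq_trans _ stop) ?leq_addl.
Qed.

Lemma wall_endS y l : len y < len l.+1 + A -> wall_end y.+1 l.+1 = wall_end y l.
Proof.
move=> lt_y; rewrite [RHS]/wall_end wall_topE.
have [stop|_ //] := boolP (wall_stop y l).
have lt_yA : len y < A by case/orP: stop => //; lia.
rewrite leqNgt lt_yA.
case E: wall_end => [t|] //; have [le_yt le_At _] := wall_end_some E.
have := len_nonincr (ltnW le_yt); lia.
Qed.

Lemma wall_end_target y l t : wall_end y l = Some t -> len y < len l + A ->
  col (len t - A) = (l + (t - y)).+1.
Proof.
move=> E lt_y; have [le_yt le_At stop] := wall_end_some E.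
have inv : len t < len (l + (t - y)) + A.
  by move: E; rewrite /wall_end; case: ifP => // _ [<-]; exact: wall_top_inv.
have lt_col : l + (t - y) < col (len t - A) by rewrite -len_col; lia.
have ge_col : ~~ ((l + (t - y)).+1 < col (len t - A)) by rewrite -len_col; lia.
lia.
Qed.

(* Slide the source left to the wall, then let multiplication by y carry the entry up the
   wall as long as the target stays in the diagram. *)
Lemma stair_hom_wall (K : fieldType) (phi : homfun K) x y l : stair_hom len phi ->
  len y <= x -> A <= x -> x - A < len l ->
  phi x y (x - A) l =
    if wall_end y l is Some t then phi (len t) t (len t - A) (l + (t - y)) else 0%R.
Proof.
move=> hom; have [_ _ phiy] := hom.
rewrite /wall_end; move: x.
elim/wall_top_ind: y l / (wall_top y l) => [y l _ | y l nstop IH] x ley leA lt_l.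
  by rewrite (stair_hom_row hom A_gt0) //; case: ltnP => //=; rewrite subnn addn0.
move: nstop; rewrite /wall_stop negb_or -!ltnNge ltnS => /andP[le_Ay lt_y].
rewrite (stair_hom_row hom A_gt0) // ltnNge le_Ay /=.
rewrite -(phiy (len y) y (len y - A) l.+1) ?ltnn //; last lia.
have le_len := len_nonincr (leqnSn y); have ge_top := wall_top_ge y.+1 l.+1.
rewrite IH //; try lia.
by case: ifP => //= _; congr (phi _ _ _ _); lia.
Qed.

End Climb.
End Staircase.

(** * Arrows and the owner map *)

(* An arrow (i, j, false) is d_{i,j} and (i, j, true) is u_{i,j}. *)
Definition arrow := (nat * nat * bool)%type.

Record entry := Entry { src_x : nat; src_y : nat; tgt_x : nat; tgt_y : nat }.

Definition coef (K : Type) (phi : homfun K) (e : entry) : K :=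
  phi (src_x e) (src_y e) (tgt_x e) (tgt_y e).

Definition disp_x (e : entry) : int := ((tgt_x e)%:Z - (src_x e)%:Z)%R.
Definition disp_y (e : entry) : int := ((tgt_y e)%:Z - (src_y e)%:Z)%R.

Section Owner.

Variables len col : nat -> nat.
Hypothesis len_col : forall i j, (i < len j) = (j < col i).

Lemma col_len i j : (i < col j) = (j < len i).
Proof. by rewrite len_col. Qed.

Definition pivot (al : arrow) : entry :=
  let: (i, j, up) := al in
  if up then Entry i (col i) (len j).-1 j else Entry (len j) j i (col i).-1.

(* The arrows of positive T-weight: every d_{i,j} and the u_{i,j} with i = len j - 1. *)
Definition pos_arrow (al : arrow) : bool :=
  let: (i, j, up) := al in (i < len j) && (up ==> (i == (len j).-1)).

(* The arrow whose pivot determines the entry (x, y, k, l) of every [stair_hom] map, when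
   k < x or (k = x and l < y); [None] when the entry is forced to vanish. *)
Definition owner x y k l : option arrow :=
  if (x < len y) || ~~ (k < len l) then None
  else if k < x then
    omap (fun t => (len t - (x - k), t, false)) (wall_end len col (x - k) y l)
  else if (k == x) && (l < y) then
    omap (fun t => (t, col t - (y - l), true)) (wall_end col len (y - l) x k)
  else None.

Lemma owner_shift_x x y k l : ~~ (x < len y) -> k < len l ->
  owner x.+1 y k l = if k is k'.+1 then owner x y k' l else None.
Proof.
move=> out_xy in_kl; have out_Sxy : (x.+1 < len y) = false by apply/negbTE; lia.
rewrite /owner out_Sxy in_kl /=; case: k in_kl => [|k] in_kl.
  by rewrite subn0 (wall_end_small len_col) //; lia.
rewrite (negbTE out_xy) (_ : k < len l) 1?ltnS ?subSS ?eqSS /=; last lia.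
case: ifP => // _; case: ifP => // /andP[/eqP eq_kx lt_ly].
rewrite eq_kx (wall_endS col_len) //; first lia.
by move: out_xy in_kl; rewrite eq_kx !len_col; lia.
Qed.

Lemma owner_shift_y x y k l : ~~ (x < len y) -> k < len l ->
  owner x y.+1 k l = if l is l'.+1 then owner x y k l' else None.
Proof.
move=> out_xy in_kl; have le_len := len_nonincr len_col (leqnSn y).
have out_xSy : (x < len y.+1) = false by apply/negbTE; lia.
rewrite /owner out_xSy in_kl /=; case: l in_kl => [|l] in_kl.
  case: ifP => lt_kx; first by rewrite (wall_end_below len_col) //; lia.
  case: ifP => // _.
  by rewrite (wall_end_small col_len) //; move: out_xy; rewrite len_col; lia.
have le_lenl := len_nonincr len_col (leqnSn l).
rewrite (negbTE out_xy) (_ : k < len l) ?subSS ?ltnS /=; last lia.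
by case: ifP => lt_kx //; rewrite (wall_endS len_col) //; lia.
Qed.

Lemma owner_pivot al : pos_arrow al -> coef owner (pivot al) = Some al.
Proof.
case: al => [[i j] []] /andP[in_ij] /=; have lt_jc : j < col i by rewrite -len_col.
  move/eqP=> eq_i.
  rewrite /coef /owner /= -eq_i len_col ltnn in_ij ltnn eqxx lt_jc /=.
  rewrite (wall_end_start col_len); [by congr Some; congr (_, _, _); lia | lia |].
  suff : ~~ (j < col i.+1) by lia.
  by rewrite -len_col; lia.
have in_pivot : i < len (col i).-1 by rewrite len_col; lia.
move=> _; rewrite /coef /owner /= ltnn in_pivot in_ij /=.
rewrite (wall_end_start len_col); [by congr Some; congr (_, _, _); lia | lia |].
rewrite (ltn_predK lt_jc); suff : ~~ (i < len (col i)) by lia.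
by rewrite len_col ltnn.
Qed.

Lemma owner_outside x y k l :
  ~~ ((k < x) || (k == x) && (l < y)) -> owner x y k l = None.
Proof. by case/norP=> /negbTE lt_kx /negbTE eq_kx; rewrite /owner lt_kx eq_kx; case: ifP. Qed.

Lemma owner_spec x y k l al : owner x y k l = Some al ->
  [/\ pos_arrow al, disp_x (pivot al) = (k%:Z - x%:Z)%R
    & disp_y (pivot al) = (l%:Z - y%:Z)%R].
Proof.
rewrite /owner; case: ifP => // /norP[out_xy /negbNE in_kl].
case: ifP => [lt_kx | _].
  case E: wall_end => [t|] //= [<-].
  have A_gt0 : 0 < x - k by lia.
  have [le_yt le_At _] := wall_end_some len_col A_gt0 E.
  have lt_y : len y < len l + (x - k) by lia.
  have tgt := wall_end_target len_col A_gt0 E lt_y.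
  by rewrite /pos_arrow /disp_x /disp_y /= tgt /=; split; lia.
case: ifP => // /andP[/eqP eq_kx lt_ly]; case E: wall_end => [t|] //= [<-].
have A_gt0 : 0 < y - l by lia.
have [le_xt le_At _] := wall_end_some col_len A_gt0 E.
have lt_x : col x < col k + (y - l) by rewrite eq_kx; lia.
have tgt := wall_end_target col_len A_gt0 E lt_x.
by rewrite /pos_arrow /disp_x /disp_y /= tgt eq_kx; split; lia.
Qed.

Lemma stair_hom_owner (K : fieldType) (phi : homfun K) x y k l : stair_hom len phi ->
  (k < x) || (k == x) && (l < y) ->
  phi x y k l = oapp (fun al => coef phi (pivot al)) 0%R (owner x y k l).
Proof.
move=> hom region; have [phi0 _ _] := hom.
have [out|/norP[out_xy /negbNE in_kl]] := boolP ((x < len y) || ~~ (k < len l)).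
  by rewrite phi0 // /owner out.
rewrite /owner (negbTE out_xy) in_kl /=.
case/orP: region => [lt_kx | /andP[/eqP eq_kx lt_ly]].
  have A_gt0 : 0 < x - k by lia.
  rewrite lt_kx {1}(_ : k = x - (x - k)); last lia.
  rewrite (stair_hom_wall len_col A_gt0 hom); try lia.
  case E: wall_end => [t|] //=.
  by rewrite /coef /= (wall_end_target len_col A_gt0 E) //; lia.
have A_gt0 : 0 < y - l by lia.
rewrite eq_kx ltnn eqxx lt_ly /=.
have hom_tr := stair_hom_transpose len_col hom.
have := stair_hom_wall col_len A_gt0 hom_tr (x := y) (y := x) (l := x).
rewrite (_ : y - (y - l) = l); last lia.
move=> ->; try by move: out_xy in_kl; rewrite eq_kx !len_col; lia.
case E: wall_end => [t|] //=.
have [le_xt _ _] := wall_end_some col_len A_gt0 E.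
by rewrite /coef /= (wall_end_target col_len A_gt0 E) //=; lia.
Qed.

End Owner.

Lemma rowl_colh s : sorted geq s -> forall i j, (i < rowl s j) = (j < colh s i).
Proof.
move=> + i j; elim: s j => [|x s IH] j sorted_xs; first by rewrite /rowl /colh nth_nil.
have sorted_s := path_sorted sorted_xs.
have all_le : all (geq x) s.
  by apply: order_path_min sorted_xs => ? ? ? /= h1 h2; apply: leq_trans h2 h1.
rewrite /rowl /colh /= -/(colh s i) -/(rowl s).
have [lt_ix | le_xi] := ltnP i x; first by case: j => //= j; rewrite add1n ltnS IH.
have nth_le k : nth 0 s k <= x.
  by case: (ltnP k (size s)) => [/(mem_nth 0) /(allP all_le) | /(nth_default 0) ->].
have -> : colh s i = 0.
  apply/eqP; rewrite -leqn0 leqNgt -has_count; apply/hasPn => k /(allP all_le) /= le_kx.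
  by rewrite -leqNgt (leq_trans le_kx le_xi).
by case: j => [|j] /=; rewrite ltnNge ?le_xi // (leq_trans (nth_le j) le_xi).
Qed.

Lemma colh0_le_sumn s : colh s 0 <= sumn s.
Proof. by elim: s => //= x s; rewrite /colh /= -/(colh s 0); case: x => //= x; lia. Qed.

Lemma uniq_flatten_keyed (S T : eqType) (key : T -> S) (F : S -> seq T) (r : seq S) :
  uniq r -> (forall u, uniq (F u)) -> (forall u t, t \in F u -> key t = u) ->
  uniq (flatten [seq F u | u <- r]).
Proof.
move=> uniq_r uniq_F keyF; elim: r uniq_r => [|u r IH] //= /andP[u_notin uniq_r].
rewrite cat_uniq uniq_F IH // andbT; apply/hasPn => t /flatten_mapP[v v_in t_in].
by apply: contra u_notin => /keyF <-; rewrite (keyF _ _ t_in).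
Qed.

Lemma sumn_map_iota m (F : nat -> nat) : sumn [seq F i | i <- iota 0 m] = \sum_(i < m) F i.
Proof. by rewrite sumnE big_map -(big_mkord xpredT) /index_iota subn0. Qed.

Definition box_arrows (s : seq nat) : seq arrow :=
  flatten [seq flatten [seq [:: (i, j, false); (i, j, true)] | i <- iota 0 (rowl s j)]
          | j <- iota 0 (size s)].

Lemma box_arrows_uniq s : uniq (box_arrows s).
Proof.
apply: (uniq_flatten_keyed (key := fun al : arrow => al.1.2)
  (F := fun j => flatten [seq [:: (i, j, false); (i, j, true)] | i <- iota 0 (rowl s j)]))
  => [|j|j al]; first exact: iota_uniq.
- apply: (uniq_flatten_keyed (key := fun al : arrow => al.1.1)
    (F := fun i => [:: (i, j, false); (i, j, true)])) => [|i|i al]; first exact: iota_uniq.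
    by rewrite /= andbT inE; apply/negP => /eqP[].
  by rewrite !inE => /orP[] /eqP ->.
- by case/flatten_mapP=> i _; rewrite !inE => /orP[] /eqP ->.
Qed.

Lemma mem_box_arrows s al : pos_arrow (rowl s) al -> al \in box_arrows s.
Proof.
case: al => [[i j] up] /andP[in_ij _].
have lt_j : j < size s.
  by rewrite ltnNge; apply: contraL in_ij => /(nth_default 0); rewrite /rowl => ->.
apply/flatten_mapP; exists j; first by rewrite mem_iota.
by apply/flatten_mapP; exists i; rewrite ?mem_iota //; case: up; rewrite !inE eqxx ?orbT.
Qed.

Local Open Scope ring_scope.

Lemma homfun_ext (K : Type) (phi psi : homfun K) :
  (forall x y k l, phi x y k l = psi x y k l) -> phi = psi.
Proof.
by move=> eq_phi; do 4 apply: FunctionalExtensionality.functional_extensionality => ?.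
Qed.

Lemma coef_lincomb (K : fieldType) m (c : 'I_m -> K) (v : 'I_m -> homfun K) e :
  coef (lincomb c v) e = \sum_(h < m) c h * coef (v h) e.
Proof. by []. Qed.

Lemma has_dim_dual_basis (K : fieldType) (P : homfun K -> Prop) d
    (B : 'I_d -> homfun K) (e : 'I_d -> entry) :
  (forall h, P (B h)) -> (forall g h, coef (B g) (e h) = (g == h)%:R) ->
  (forall phi, P phi -> phi = lincomb (fun h => coef phi (e h)) B) ->
  has_dim (in_span P) d.
Proof.
move=> PB dual expand; exists B; split.
- move=> h; exists 1%N, (fun _ => 1), (fun _ => B h); split=> //.
  by apply: homfun_ext => x y k l; rewrite /lincomb big_ord1 mul1r.
- move=> c c0 h; have := congr1 (fun psi => coef psi (e h)) c0.
  rewrite coef_lincomb (bigD1 h) //= big1 => [|g ne_gh]; last first.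
    by rewrite dual (negbTE ne_gh) mulr0.
  by rewrite dual eqxx mulr1 addr0.
- move=> _ [m [c [v [Pv ->]]]]; exists (fun h => coef (lincomb c v) (e h)).
  apply: homfun_ext => x y k l; under [RHS]eq_bigr do rewrite coef_lincomb mulr_suml.
  rewrite exchange_big; apply: eq_bigr => g _ /=.
  by rewrite {1}(expand _ (Pv g)) /lincomb mulr_sumr; apply: eq_bigr => h _; rewrite mulrA.
Qed.

Lemma sum_nth_indicator (R : pzSemiRingType) (T : eqType) (A : seq T) x0 (F : T -> R)
    (o : option T) : uniq A ->
  \sum_(h < size A) F (nth x0 A h) * (o == Some (nth x0 A h))%:R =
    oapp (fun t => if t \in A then F t else 0) 0 o.
Proof.
move=> uniqA; case: o => [t|] /=; last by rewrite big1 // => h _; rewrite mulr0.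
have [tA | tNA] := boolP (t \in A); last first.
  rewrite big1 // => h _; case: eqP => [[eq_t] | _]; last by rewrite mulr0.
  by move: tNA; rewrite eq_t mem_nth.
have idx_t : (index t A < size A)%N by rewrite index_mem.
rewrite (bigD1 (Ordinal idx_t)) //= nth_index // eqxx mulr1 big1 ?addr0 // => h ne_h.
case: eqP => [[eq_t] | _]; last by rewrite mulr0.
by move: ne_h; rewrite -(inj_eq val_inj) /= eq_t index_uniq ?eqxx.
Qed.

Lemma act_expz (K : fieldType) (t : K) (c d : int) (phi : homfun K) : t != 0 ->
  act (t ^ c) (t ^ d) phi =
    (fun x y k l => t ^ (c * (k%:Z - x%:Z) + d * (l%:Z - y%:Z)) * phi x y k l).
Proof. by move=> t_neq0; apply: homfun_ext => x y k l; rewrite /act !exprz_exp expfzDr. Qed.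

Lemma prim_root_neq0 (K : fieldType) n (zeta : K) : n.-primitive_root zeta -> zeta != 0.
Proof. by move=> prim; rewrite (prim_root_eq0 prim) -lt0n (prim_order_gt0 prim). Qed.

Lemma prim_expz_eq1 (K : fieldType) n (zeta : K) (m : int) :
  n.-primitive_root zeta -> (zeta ^ m == 1) = (n%:Z %| m)%Z.
Proof.
move=> prim; rewrite dvdzE; case: m => m /=; first by rewrite (prim_order_dvd prim).
by rewrite invr_eq1 (prim_order_dvd prim).
Qed.

Lemma fixed_entry_dvd (K : fieldType) n (zeta : K) (a b : int) (phi : homfun K) x y k l :
  n.-primitive_root zeta -> act (zeta ^ a) (zeta ^ b) phi = phi -> phi x y k l != 0 ->
  (n%:Z %| a * (k%:Z - x%:Z) + b * (l%:Z - y%:Z))%Z.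
Proof.
move=> prim fixed nz; have := congr1 (fun psi => psi x y k l) fixed.
rewrite act_expz ?(prim_root_neq0 prim) // -{2}[phi x y k l]mul1r => /(mulIf nz) /eqP.
by rewrite (prim_expz_eq1 _ prim).
Qed.

Lemma weight_entry (K : numFieldType) p q (w : int) (phi : homfun K) x y k l :
  T_weight p q w phi -> phi x y k l != 0 ->
  w = - p%:Z * (k%:Z - x%:Z) + - q%:Z * (l%:Z - y%:Z).
Proof.
move=> wt_phi nz; have two_neq0 : (2 : K) != 0 by rewrite pnatr_eq0.
move: (congr1 (fun psi => psi x y k l) (wt_phi 2 two_neq0)).
rewrite act_expz // => /(mulIf nz); set e := (_ + _)%R => eq_pow.
have : (2 : K) ^ (e - w) == 1 by rewrite expfzDr // eq_pow -expfzDr // subrr.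
by rewrite pexprz_eq1 ?ler0n // pnatr_eq1 orbF subr_eq0 => /eqP.
Qed.

Definition invariant (len col : nat -> nat) (a b : int) (n : nat) (al : arrow) : bool :=
  (n%:Z %| a * disp_x (pivot len col al) + b * disp_y (pivot len col al))%Z.

Definition arrow_weight (len col : nat -> nat) (p q : nat) (al : arrow) : int :=
  - p%:Z * disp_x (pivot len col al) + - q%:Z * disp_y (pivot len col al).

Section ArrowVectors.

Variables len col : nat -> nat.
Hypothesis len_col : forall i j, (i < len j)%N = (j < col i)%N.
Variable K : fieldType.

Definition arrow_vec (al : arrow) : homfun K :=
  fun x y k l => (owner len col x y k l == Some al)%:R.

Lemma arrow_vec_stair_hom al : stair_hom len (arrow_vec al).
Proof.
split=> x y k l; first by rewrite /arrow_vec /owner => ->.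
  by move=> out_xy in_kl; rewrite /arrow_vec owner_shift_x //; case: k in_kl.
by move=> out_xy in_kl; rewrite /arrow_vec owner_shift_y //; case: l in_kl.
Qed.

Lemma coef_arrow_vec al al' :
  pos_arrow len al -> coef (arrow_vec al') (pivot len col al) = (al == al')%:R.
Proof. by move=> pos_al; have := owner_pivot len_col pos_al; rewrite /coef /arrow_vec => ->. Qed.

Lemma act_expz_arrow_vec (t : K) (c d : int) al : t != 0 ->
  act (t ^ c) (t ^ d) (arrow_vec al) =
    (fun x y k l => t ^ (c * disp_x (pivot len col al) + d * disp_y (pivot len col al))
                    * arrow_vec al x y k l).
Proof.
move=> t_neq0; rewrite act_expz //; apply: homfun_ext => x y k l.
rewrite /arrow_vec; case: eqP => [/(owner_spec len_col) [_ -> ->] // | _].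
by rewrite !mulr0.
Qed.

Lemma arrow_vec_fixed n (zeta : K) a b al : n.-primitive_root zeta ->
  invariant len col a b n al -> act (zeta ^ a) (zeta ^ b) (arrow_vec al) = arrow_vec al.
Proof.
move=> prim; rewrite /invariant -(prim_expz_eq1 _ prim) => /eqP inv.
rewrite act_expz_arrow_vec ?(prim_root_neq0 prim) // inv.
by apply: homfun_ext => x y k l; rewrite mul1r.
Qed.

Lemma arrow_vec_weight p q al : T_weight p q (arrow_weight len col p q al) (arrow_vec al).
Proof. by move=> t t_neq0; rewrite act_expz_arrow_vec. Qed.

End ArrowVectors.

Section PositiveWeight.

Variables len col : nat -> nat.
Hypothesis len_col : forall i j, (i < len j)%N = (j < col i)%N.
Variables (p q : nat).
Hypotheses (q_gt0 : (0 < q)%N) (p_large : (q * col 0 < p)%N).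

Lemma arrow_weight_gt0 al : pos_arrow len al -> 0 < arrow_weight len col p q al.
Proof.
case: al => [[i j] up] /andP[in_ij up_cond].
have lt_jc : (j < col i)%N by rewrite -len_col.
have le_ci : (col i <= col 0)%N := len_nonincr (col_len len_col) (leq0n i).
rewrite /arrow_weight /disp_x /disp_y; case: up up_cond => /= [/eqP eq_i | _]; last nia.
by rewrite -eq_i; nia.
Qed.

Section Entries.

Variables (K : numFieldType) (w : int) (phi : homfun K).
Hypotheses (hom_phi : stair_hom len phi) (wt_phi : T_weight p q w phi) (w_gt0 : 0 < w).

Lemma pos_weight_region x y k l :
  phi x y k l != 0 -> (k < x)%N || (k == x) && (l < y)%N.
Proof.
move=> nz; have eq_w := weight_entry wt_phi nz.
have le_y : (y <= l + col 0)%N.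
  by rewrite leqNgt; apply: contra nz => far; rewrite (stair_hom_far len_col x k hom_phi far).
apply/negPn/negP; rewrite negb_or negb_and -leqNgt -leqNgt.
move: w_gt0; rewrite eq_w; case: (ltngtP k x) => //= cmp_kx; nia.
Qed.

Lemma pos_weight_entry x y k l :
  phi x y k l = oapp (fun al => coef phi (pivot len col al)) 0 (owner len col x y k l).
Proof.
have [region | out] := boolP ((k < x)%N || (k == x) && (l < y)%N).
  exact: stair_hom_owner.
rewrite owner_outside //=; apply/eqP; apply: contraR out; exact: pos_weight_region.
Qed.

End Entries.
End PositiveWeight.

(** * A basis of the positive part *)

Definition beta_arrows (a b : int) (n : nat) (s : seq nat) : seq arrow :=
  [seq al <- box_arrows s | pos_arrow (rowl s) al && invariant (rowl s) (colh s) a b n al].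

Lemma mem_beta_arrows a b n s al :
  (al \in beta_arrows a b n s) = pos_arrow (rowl s) al && invariant (rowl s) (colh s) a b n al.
Proof. by rewrite mem_filter andb_idr // => /andP[/mem_box_arrows]. Qed.

Lemma beta_arrows_uniq a b n s : uniq (beta_arrows a b n s).
Proof. exact/filter_uniq/box_arrows_uniq. Qed.

Section PartitionArrows.

Variables (a b : int) (n : nat) (s : seq nat).
Hypothesis sorted_s : sorted geq s.

Lemma invariant_down i j : (i < rowl s j)%N ->
  invariant (rowl s) (colh s) a b n (i, j, false) = d_inv a b n s i j.
Proof.
rewrite rowl_colh // => lt_j; rewrite /invariant /d_inv /inv_arrow /disp_x /disp_y /=.
rewrite !dvdzE predn_int; last by apply: leq_ltn_trans lt_j.
by rewrite -[X in (_ %| X)%N]abszN; congr (_ %| `|_|)%N; ring.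
Qed.

Lemma invariant_up i j : (i < rowl s j)%N ->
  invariant (rowl s) (colh s) a b n (i, j, true) = u_inv a b n s i j.
Proof.
move=> in_ij; rewrite /invariant /u_inv /inv_arrow /disp_x /disp_y /=.
rewrite !dvdzE predn_int; last by apply: leq_ltn_trans in_ij.
by rewrite -[X in (_ %| X)%N]abszN; congr (_ %| `|_|)%N; ring.
Qed.

Lemma size_beta_arrows : size (beta_arrows a b n s) = beta a b n s.
Proof.
rewrite size_filter count_flatten -map_comp sumn_map_iota.
apply: eq_bigr => j _ /=; rewrite count_flatten -map_comp sumn_map_iota.
apply: eq_bigr => i _ /=; have in_ij := ltn_ord i.
by rewrite in_ij invariant_down // invariant_up //= addn0 andbC.
Qed.

Definition beta_arrow (h : nat) : arrow := nth (0, 0, false)%N (beta_arrows a b n s) h.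

Lemma beta_arrowP (h : 'I_(size (beta_arrows a b n s))) :
  pos_arrow (rowl s) (beta_arrow h) &&
  invariant (rowl s) (colh s) a b n (beta_arrow h).
Proof. by rewrite -mem_beta_arrows mem_nth. Qed.

Lemma coef_beta_arrow_vec (K : fieldType) (g h : 'I_(size (beta_arrows a b n s))) :
  coef (arrow_vec (rowl s) (colh s) K (beta_arrow g)) (pivot (rowl s) (colh s) (beta_arrow h))
  = (g == h)%:R.
Proof.
have /andP[pos_h _] := beta_arrowP h.
rewrite (coef_arrow_vec (rowl_colh sorted_s)) // nth_uniq ?beta_arrows_uniq //.
by congr (nat_of_bool _)%:R; exact: eq_sym.
Qed.

Lemma arrow_vec_pos_tangent (K : numFieldType) (zeta : K) p q al :
  n.-primitive_root zeta -> (0 < q)%N -> (q * colh s 0 < p)%N ->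
  pos_arrow (rowl s) al -> invariant (rowl s) (colh s) a b n al ->
  tangent zeta a b s (arrow_vec (rowl s) (colh s) K al) /\
  exists w : int, 0 < w /\ T_weight p q w (arrow_vec (rowl s) (colh s) K al).
Proof.
move=> prim q_gt0 p_large pos_al inv_al; have len_col := rowl_colh sorted_s.
split.
  by split; [exact: arrow_vec_stair_hom | exact: (arrow_vec_fixed len_col prim inv_al)].
exists (arrow_weight (rowl s) (colh s) p q al); split; last exact: arrow_vec_weight.
exact: arrow_weight_gt0.
Qed.

Lemma tangent_expansion (K : numFieldType) (zeta : K) p q (w : int) (phi : homfun K) :
  n.-primitive_root zeta -> (0 < q)%N -> (q * colh s 0 < p)%N ->
  tangent zeta a b s phi -> 0 < w -> T_weight p q w phi ->
  phi = lincomb (fun h : 'I_(size (beta_arrows a b n s)) =>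
                  coef phi (pivot (rowl s) (colh s) (beta_arrow h)))
                (fun h => arrow_vec (rowl s) (colh s) K (beta_arrow h)).
Proof.
move=> prim q_gt0 p_large [hom_phi fixed] w_gt0 wt_phi; have len_col := rowl_colh sorted_s.
apply: homfun_ext => x y k l; rewrite (pos_weight_entry len_col q_gt0 p_large hom_phi wt_phi) //.
rewrite /lincomb /arrow_vec /beta_arrow.
rewrite (sum_nth_indicator _ (fun al => coef phi (pivot (rowl s) (colh s) al)));
  last exact: beta_arrows_uniq.
case E: owner => [al|] //=; case: ifP => // al_notin.
apply/eqP; apply: contraFT al_notin => nz; have [pos_al _ _] := owner_spec len_col E.
by rewrite mem_beta_arrows pos_al; exact: (fixed_entry_dvd prim fixed nz).
Qed.

End PartitionArrows.

Theorem proposition3p1 (K : numClosedFieldType) (r n : nat) (a b : int) (zeta : K) :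
  (0 < r)%N -> (0 < n)%N -> coprimez a b -> n.-primitive_root zeta ->
  exists f : nat -> nat, forall p q : nat, (0 < q)%N -> (f q < p)%N ->
    forall s : seq nat, in_B r a b n s ->
      has_dim (Tplus zeta a b p q s) (beta a b n s).
Proof.
(* Only sortedness and the size of lambda matter: the count holds for every partition. *)
move=> _ _ _ prim; exists (fun q => q * (r * n))%N => p q q_gt0 lt_p s.
case/and3P=> /andP[sorted_s _] /eqP sum_s _.
have p_large : (q * colh s 0 < p)%N.
  by apply: leq_ltn_trans lt_p; rewrite leq_mul2l -sum_s colh0_le_sumn orbT.
rewrite -(size_beta_arrows a b n sorted_s).
apply: (has_dim_dual_basis
  (B := fun h => arrow_vec (rowl s) (colh s) K (beta_arrow a b n s h))
  (e := fun h => pivot (rowl s) (colh s) (beta_arrow a b n s h))).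
- move=> h; case/andP: (beta_arrowP h) => pos_h inv_h.
  exact: (arrow_vec_pos_tangent sorted_s prim q_gt0 p_large pos_h inv_h).
- exact: coef_beta_arrow_vec.
- move=> phi [tan_phi [w [w_gt0 wt_phi]]].
  exact: (tangent_expansion sorted_s prim q_gt0 p_large tan_phi w_gt0 wt_phi).
Qed.
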